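(* Any cache state $\mathcal S=\{y_1, \dots, y_k\}$, such that, for some $d$, the balls $\mathcal B_{d}(y_h)$ for $h=1,\dots, k$ are a tessellation of $\mathcal X$ (i.e.,~$\cup_h \mathcal B_d(y_h)=\mathcal X$ and $|\mathcal B_d(y_i)\cap \mathcal B_d(y_j)|=0$ for each $i$ and $j$), is optimal.
   Context: $\mathcal X$ is a bounded subset of $\mathbb R^p$, the cache holds $k$ objects, $C_a(x,y)=h(\|x-y\|)$ with $h$ non-decreasing and non-negative, $C_r>0$ is the retrieval cost, and $C(x,\mathcal S)=\min(\inf_{y\in\mathcal S}C_a(x,y),C_r)$. Requests have constant spatial density $\lambda$ over $\mathcal X$; the expected cost of state $\mathcal S$ is $\bar C(\mathcal S)=\int_{\mathcal X}\lambda C(x,\mathcal S)\,dx$, and a state is optimal if it minimizes it. $\mathcal B_d(y)$ is the ball of radius $d$ centered at $y$ and $|\cdot|$ denotes volume. For any state, $\bar C(\mathcal S)\ge\lambda kF(|\mathcal X|/k)$ where $F(v)=\int_{\mathcal B(y,v)}\min(C_a(x,y),C_r)\,dx$ with $\mathcal B(y,v)$ the ball of volume $v$ centered in $y$; the corollary identifies states achieving this bound. *)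

From mathcomp Require Import all_boot all_order all_algebra.
From mathcomp Require Import all_classical all_reals all_analysis.
From HB Require Import structures.
Set Implicit Arguments. Unset Strict Implicit. Unset Printing Implicit Defensive.
Import Order.TTheory GRing.Theory Num.Theory.
Local Open Scope classical_set_scope.
Local Open Scope ring_scope.

(* Points of R^p are row vectors 'rV[R]_p.  [vec R p] is a copy of 'rV[R]_p
   pointed by the origin (needed only to build the generated sigma-algebra). *)
Definition vec (R : realType) (p : nat) : Type := 'rV[R]_p.
HB.instance Definition _ (R : realType) (p : nat) :=
  Choice.copy (vec R p) 'rV[R]_p.
HB.instance Definition _ (R : realType) (p : nat) :=
  isPointed.Build (vec R p) (0%R : 'rV[R]_p).

Definition eucl_dist (R : realType) (p : nat) (x y : 'rV[R]_p) : R :=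
  Num.sqrt (\sum_(i < p) (x ord0 i - y ord0 i) ^+ 2).

Definition cball (R : realType) (p : nat) (y : 'rV[R]_p) (d : R) : set 'rV[R]_p :=
  [set x | eucl_dist x y <= d].

Definition box (R : realType) (p : nat) (a b : 'rV[R]_p) : set 'rV[R]_p :=
  [set x | forall i : 'I_p, a ord0 i < x ord0 i <= b ord0 i].

Definition boxes (R : realType) (p : nat) : set (set (vec R p)) :=
  [set B | exists a b, B = box a b].

(* R^p with its Borel sigma-algebra (generated by the boxes). *)
Notation Rp R p := (g_sigma_algebraType (@boxes R p)).

(* mu is the p-dimensional Lebesgue measure: a measure on the Borel sets of
   R^p giving to each box the product of its side lengths (this determines
   mu uniquely). *)
Definition is_lebesgue (R : realType) (p : nat)
    (mu : {measure set (Rp R p) -> \bar R}) : Prop :=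
  forall a b : 'rV[R]_p, (forall i, a ord0 i <= b ord0 i) ->
    mu (box a b) = (\prod_(i < p) (b ord0 i - a ord0 i))%:E.

Definition cost (R : realType) (p k : nat) (h : R -> R) (Cr : R)
    (S : 'I_k -> 'rV[R]_p) (x : 'rV[R]_p) : R :=
  \big[Order.min/Cr]_(j < k) h (eucl_dist x (S j)).

Definition exp_cost (R : realType) (p k : nat)
    (mu : {measure set (Rp R p) -> \bar R}) (X : set (Rp R p))
    (lam : R) (h : R -> R) (Cr : R) (S : 'I_k -> 'rV[R]_p) : \bar R :=
  (\int[mu]_(x in X) (lam * cost h Cr S x)%:E)%E.

Definition cache_state (R : realType) (p k : nat) (X : set (Rp R p))
    (S : 'I_k -> 'rV[R]_p) : Prop :=
  injective S /\ forall j, X (S j).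

Definition optimal (R : realType) (p k : nat)
    (mu : {measure set (Rp R p) -> \bar R}) (X : set (Rp R p))
    (lam : R) (h : R -> R) (Cr : R) (S : 'I_k -> 'rV[R]_p) : Prop :=
  cache_state X S /\
  forall S' : 'I_k -> 'rV[R]_p, cache_state X S' ->
    (exp_cost mu X lam h Cr S <= exp_cost mu X lam h Cr S')%E.

From mathcomp Require Import all_boot all_order all_algebra.
From mathcomp Require Import all_classical all_reals all_analysis.
From mathcomp Require Import measurable_realfun lra.
Set Implicit Arguments.
Unset Strict Implicit.
Unset Printing Implicit Defensive.
Import Order.TTheory GRing.Theory Num.Theory.
Local Open Scope classical_set_scope.
Local Open Scope ring_scope.

(* For a level t, the requests of X served at cost above t are those lying
   outside every sublevel set {x | h(|x - y_j|) <= t}, and these sets are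
   translates of a single set E_t.  If E_t reaches beyond distance d of its
   centre, monotonicity of h puts the whole ball B_d inside it, so the tiles
   already serve all of X below t.  Otherwise each translate stays in its tile;
   as the tiles overlap in null sets, their union has the measure k |E_t|,
   which bounds the union of any k translates of E_t.  So the tessellation
   minimises mu {x in X | C(x, S) > t} for every t, and a bounded cost with
   smaller tails has smaller integral (compare Riemann sums of the tails). *)

Section staircase.
Context (R : realType).

Definition stair (e : R) (N : nat) (v : R) : R :=
  \sum_(n < N) e * ((n.+1%:R * e < v)%R)%:R.

Lemma stair_ge0 (e : R) N v : 0 <= e -> 0 <= stair e N v.
Proof. by move=> e0; apply: sumr_ge0 => n _; rewrite mulr_ge0. Qed.

Lemma stair_le_min (e v : R) N : 0 <= e -> 0 <= v ->
  stair e N v <= Num.min v (N%:R * e).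
Proof.
move=> e0 v0; elim: N => [|N].
  by rewrite /stair big_ord0 mul0r le_min lexx v0.
rewrite /stair big_ord_recr /= !le_min => /andP[IHv IHN].
rewrite -[N.+1%:R]natr1; have [lt_v|ge_v] := ltP ((N%:R + 1) * e) v.
  by rewrite mulr1; apply/andP; split; lra.
by rewrite mulr0 addr0; apply/andP; split; lra.
Qed.

Lemma min_le_stair (e v : R) N : 0 < e ->
  Num.min v (N.+1%:R * e) <= e + stair e N v.
Proof.
move=> e0; elim: N => [|N IH].
  by rewrite /stair big_ord0 addr0 mul1r ge_min lexx orbT.
rewrite /stair big_ord_recr /= -/(stair e N v).
have [lt_v|ge_v] := ltP (N.+1%:R * e) v.
  move: IH; rewrite mulr1 (min_r (ltW lt_v)) ge_min => IH.
  by rewrite -[N.+2%:R]natr1; apply/orP; right; lra.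
by move: IH; rewrite mulr0 addr0 (min_l ge_v) => IH; rewrite ge_min IH.
Qed.

End staircase.

Section tail_comparison.
Context d (T : measurableType d) (R : realType) (mu : {measure set T -> \bar R}).
Implicit Types (X : set T) (f g : T -> R).

Lemma measurable_fun_gt f (a : R) : measurable_fun setT f ->
  measurable [set x | a < f x].
Proof.
by move=> mf; rewrite -preimage_itvoy -[X in measurable X]setTI; exact: mf.
Qed.

Lemma measurable_stair (e : R) N f : measurable_fun setT f ->
  measurable_fun setT (fun x => stair e N (f x)).
Proof.
move=> mf; apply: measurable_sum => n; apply: measurable_funM => //.
by apply: measurableT_comp => //; exact: measurable_fun_ltr.
Qed.

Lemma integral_stair X (e : R) N f : measurable X -> 0 <= e ->
  measurable_fun setT f ->
  (\int[mu]_(x in X) (stair e N (f x))%:E =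
   \sum_(n < N) e%:E * mu (X `&` [set x | (n.+1%:R * e < f x)%R]))%E.
Proof.
move=> mX e0 mf; have mgt n := measurable_fun_gt (n.+1%:R * e) mf.
under eq_integral do rewrite /stair -sumEFin.
rewrite ge0_integral_sum //; first last.
- by move=> n x _; rewrite lee_fin mulr_ge0.
- move=> n; apply/measurable_EFinP/measurable_funM => //.
  apply: measurableT_comp => //.
  by apply: measurable_fun_ltr => //; exact: measurable_funTS.
apply: eq_bigr => n _; rewrite setIC -integral_indic // -ge0_integralZl_EFin //.
- apply: eq_integral => x _; rewrite indicE EFinM.
  by rewrite (_ : (x \in _) = (n.+1%:R * e < f x)) //; apply/idP/idP; rewrite in_setE.
- by apply/measurable_EFinP; exact: measurable_indic.
Qed.

Section bounded.
Variables (X : set T) (f g : T -> R) (V : R).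
Hypotheses (mX : measurable X) (mf : measurable_fun setT f)
  (mg : measurable_fun setT g) (V_gt0 : 0 < V)
  (f_bnd : forall x, X x -> 0 <= f x <= V) (g_ge0 : forall x, X x -> 0 <= g x)
  (le_tails : forall t : R,
    (mu (X `&` [set x | (t < f x)%R]) <= mu (X `&` [set x | (t < g x)%R]))%E).

Lemma le_integral_tails_approx N :
  (\int[mu]_(x in X) (f x)%:E <=
   (V / N.+1%:R)%:E * mu X + \int[mu]_(x in X) (g x)%:E)%E.
Proof.
set e := V / N.+1%:R; have e_gt0 : 0 < e by rewrite divr_gt0.
have Ne : N.+1%:R * e = V by rewrite mulrC divfK.
have mstair u : measurable_fun setT u ->
    measurable_fun X (fun x => (stair e N (u x))%:E).
  by move=> mfu; apply/measurable_EFinP/measurable_funTS/measurable_stair.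
apply: (@le_trans _ _ (\int[mu]_(x in X) (e%:E + (stair e N (f x))%:E))%E).
  apply: ge0_le_integral => //.
  - by move=> x /f_bnd /andP[].
  - exact/measurable_EFinP/measurable_funTS.
  - exact: emeasurable_funD (mstair _ mf).
  - move=> x /f_bnd /andP[f0 fV]; rewrite -EFinD lee_fin.
    by have := min_le_stair (f x) N e_gt0; rewrite Ne min_l.
rewrite ge0_integralD //; first last.
- exact: mstair.
- by move=> x _; rewrite lee_fin stair_ge0 // ltW.
- by move=> x _; rewrite lee_fin ltW.
rewrite integral_cst // integral_stair //; last exact: ltW.
apply: leeD2l; apply: (@le_trans _ _ (\int[mu]_(x in X) (stair e N (g x))%:E)%E).
  rewrite integral_stair //; last exact: ltW.
  by apply: lee_sum => n _; apply: lee_wpmul2l; rewrite ?lee_fin ?(ltW e_gt0).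
apply: ge0_le_integral => //.
- by move=> x _; rewrite lee_fin stair_ge0 // ltW.
- exact: mstair.
- exact/measurable_EFinP/measurable_funTS.
- move=> x /g_ge0 g0; rewrite lee_fin.
  by have := stair_le_min N (ltW e_gt0) g0; rewrite le_min => /andP[].
Qed.

Lemma le_integral_tails : (mu X < +oo)%E ->
  (\int[mu]_(x in X) (f x)%:E <= \int[mu]_(x in X) (g x)%:E)%E.
Proof.
move=> muX_fin; have [m muXE] : exists m, mu X = m%:E.
  by exists (fine (mu X)); rewrite fineK // ge0_fin_numE.
have m0 : 0 <= m by rewrite -lee_fin -muXE.
apply/lee_addgt0Pr => eps eps_gt0.
pose N := Num.Def.archi_bound (V * m / eps).
have /archi_boundP : 0 <= V * m / eps by rewrite divr_ge0 ?mulr_ge0 // ltW.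
rewrite -/N ltr_pdivrMr // => VmN.
rewrite addeC; apply: le_trans (le_integral_tails_approx N) _.
rewrite muXE -EFinM leeD2r // lee_fin mulrAC ler_pdivrMr ?ltr0n //.
by rewrite -natr1; nra.
Qed.

End bounded.

End tail_comparison.

Lemma bigcup_finE (I : finType) (T : Type) (F : I -> set T) :
  \bigcup_i F i = \big[setU/set0]_i F i.
Proof.
by rewrite -bigcup_seq; apply: eq_bigcupl; split => i // _; exact: mem_index_enum.
Qed.

Section finite_unions.
Context d (T : measurableType d) (R : realType) (mu : {measure set T -> \bar R}).
Context (I : eqType).
Implicit Types (A : I -> set T) (s : seq I).

Lemma measure_bigsetU_le s A : (forall i, measurable (A i)) ->
  (mu (\big[setU/set0]_(i <- s) A i) <= \sum_(i <- s) mu (A i))%E.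
Proof.
move=> mA; elim: s => [|i s IH]; first by rewrite !big_nil measure0.
rewrite !big_cons; apply: le_trans (measureU2 _ _ _) _ => //.
  exact: bigsetU_measurable.
exact: leeD2l.
Qed.

Lemma measure_setI_bigsetU_null (B : set T) s A :
  measurable B -> (forall i, measurable (A i)) ->
  {in s, forall i, mu (B `&` A i) = 0%E} ->
  mu (B `&` \big[setU/set0]_(i <- s) A i) = 0%E.
Proof.
move=> mB mA BA0; rewrite big_distrr /=; apply/eqP; rewrite -measure_le0.
apply: le_trans (measure_bigsetU_le _ _) _ => [i|]; first exact: measurableI.
by rewrite big_seq big1 // => i /BA0.
Qed.

Lemma sum_le_measure_bigsetU s A : uniq s -> (forall i, measurable (A i)) ->
  (forall i j, i != j -> mu (A i `&` A j) = 0%E) ->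
  (forall i, (mu (A i) < +oo)%E) ->
  (\sum_(i <- s) mu (A i) <= mu (\big[setU/set0]_(i <- s) A i))%E.
Proof.
move=> + mA A0 Afin; elim: s => [|i s IH]; first by rewrite !big_nil measure0.
move=> /= /andP[i_s s_uniq].
rewrite !big_cons measureUfinl //; last exact: bigsetU_measurable.
rewrite measure_setI_bigsetU_null // ?sube0 ?leeD2l ?IH // => j j_s.
by apply: A0; apply: contraNneq i_s => ->.
Qed.

End finite_unions.

Section euclidean.
Context (R : realType) (p : nat).
Implicit Types (x c a b : 'rV[R]_p).
Local Notation T := (Rp R p).

Lemma eucl_dist_ge0 x c : 0 <= eucl_dist x c.
Proof. exact: sqrtr_ge0. Qed.

Lemma eucl_distB0 x c : eucl_dist (x - c) 0 = eucl_dist x c.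
Proof. by congr Num.sqrt; apply: eq_bigr => i _; rewrite !mxE subr0. Qed.

Lemma abs_coord_le_eucl_dist x i : `|x ord0 i| <= eucl_dist x 0.
Proof.
rewrite /eucl_dist -sqrtr_sqr; apply: ler_wsqrtr.
by rewrite (bigD1 i) //= mxE subr0 lerDl sumr_ge0 // => j _; rewrite sqr_ge0.
Qed.

Lemma exists_coord_bound x : exists n : nat, forall i, `|x ord0 i| < n%:R.
Proof.
exists (Num.Def.archi_bound (eucl_dist x 0)) => i.
exact: le_lt_trans (abs_coord_le_eucl_dist x i) (archi_boundP (eucl_dist_ge0 _ _)).
Qed.

Lemma box_set0 a b : ~ (forall i, a ord0 i <= b ord0 i) -> box a b = set0.
Proof.
move=> /existsNP [i ab_i]; apply/seteqP; split => x // /(_ i) /andP[ax xb].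
by apply: ab_i; exact: ltW (lt_le_trans ax xb).
Qed.

Lemma setI_closed_boxes : setI_closed (@boxes R p).
Proof.
move=> _ _ [a [b ->]] [a' [b' ->]].
exists (\row_i Num.max (a ord0 i) (a' ord0 i)), (\row_i Num.min (b ord0 i) (b' ord0 i)).
apply/seteqP; split => x /=.
- move=> [x_ab x_ab'] i; rewrite !mxE gt_max le_min.
  by have /andP[-> ->] := x_ab i; have /andP[-> ->] := x_ab' i.
- move=> x_box; split => i; have := x_box i;
    by rewrite !mxE gt_max le_min => /and3P[/andP[? ?] ? ?]; apply/andP.
Qed.

Lemma measurable_box a b : measurable (box a b : set T).
Proof. by apply: sub_sigma_algebra; exists a, b. Qed.

Definition translate c : T -> T := fun x => x - c.

Lemma preimage_translate_box c a b :
  translate c @^-1` box a b = box (a + c) (b + c).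
Proof.
apply/seteqP; split => x /= x_box i; have := x_box i; rewrite !mxE => /andP[? ?];
  by apply/andP; split; lra.
Qed.

Lemma measurable_translate c : measurable_fun setT (translate c).
Proof.
apply: (@measurability _ _ T T setT _ (@boxes R p)) => //.
move=> _ [_ [a [b ->]] <-]; rewrite setTI preimage_translate_box.
exact: measurable_box.
Qed.

Lemma measurable_coord i : measurable_fun setT (fun x : T => x ord0 i).
Proof.
apply: (measurability (@RGenOInfty.G R)); first exact: RGenOInfty.measurableE.
move=> _ [_ [a ->] <-]; rewrite setTI.
pose lo n : 'rV[R]_p := \row_j (if j == i then a else - n%:R).
pose hi n : 'rV[R]_p := \row_j n%:R.
suff -> : (fun x : T => x ord0 i) @^-1` `]a, +oo[ =
    \bigcup_n (box (lo n) (hi n) : set T).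
  by apply: bigcupT_measurable => n; exact: measurable_box.
apply/seteqP; split => x /=.
- rewrite in_itv /= andbT => ax; have [n x_n] := exists_coord_bound x.
  exists n => // j; rewrite !mxE; have := x_n j; rewrite ltr_norml => /andP[? ?].
  by apply/andP; split; [case: eqP => [->|_] | exact: ltW].
- move=> [n _ /(_ i)]; rewrite !mxE eqxx in_itv /= andbT => /andP[] //.
Qed.

Lemma measurable_eucl_dist c : measurable_fun setT (fun x : T => eucl_dist x c).
Proof.
apply: measurableT_comp (continuous_measurable_fun (@sqrt_continuous R)) _.
apply: measurable_sum => i; apply: measurable_funX.
by apply: measurable_funB => //; exact: measurable_coord.
Qed.

Lemma measurable_cball c d : measurable (cball c d : set T).
Proof.
have := measurable_eucl_dist c measurableT (measurable_itv `]-oo, d]).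
by rewrite setTI preimage_itvNyc.
Qed.

End euclidean.

Section lebesgue.
Context (R : realType) (p : nat) (mu : {measure set (Rp R p) -> \bar R}).
Hypothesis lebesgue_mu : is_lebesgue mu.
Implicit Types (a b c : 'rV[R]_p).

Lemma lebesgue_box_lty a b : (mu (box a b) < +oo)%E.
Proof.
have [ab|ab] := pselect (forall i, a ord0 i <= b ord0 i).
  by rewrite lebesgue_mu // ltry.
by rewrite box_set0 // measure0 ltry.
Qed.

Lemma lebesgue_translate c A : measurable A -> mu (translate c @^-1` A) = mu A.
Proof.
pose cube n : set (Rp R p) := box (\row_i (- n%:R)) (\row_i n%:R).
have cube_cover : \bigcup_n cube n = setT.
  apply/seteqP; split => x // _; have [n x_n] := exists_coord_bound x.
  by exists n => // i; rewrite !mxE; have := x_n i; rewrite ltr_norml => /andP[-> /ltW].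
pose nu : {measure set _ -> \bar R} := pushforward mu (translate c).
move=> mA; rewrite (measure_unique (@boxes R p : set (set (Rp R p))) cube erefl
  (@setI_closed_boxes R p) _ _ mu (nu (measurable_translate c)) _ _ A mA) //.
- by move=> n; exists (\row_i (- n%:R)), (\row_i n%:R).
- move=> _ [a [b ->]] /=; rewrite /pushforward preimage_translate_box.
  have [ab|ab] := pselect (forall i, a ord0 i <= b ord0 i).
    rewrite !lebesgue_mu // => [|i]; last by rewrite !mxE lerD2r.
    by congr (_%:E); apply: eq_bigr => i _; rewrite !mxE opprD addrACA subrr addr0.
  rewrite box_set0 // box_set0 // => abc; apply: ab => i.
  by have := abc i; rewrite !mxE lerD2r.
- by move=> n; exact: lebesgue_box_lty.
Qed.

Lemma lebesgue_bounded_lty (X : set (Rp R p)) : measurable X ->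
  (exists M, forall x, X x -> eucl_dist x 0 <= M) -> (mu X < +oo)%E.
Proof.
move=> mX [M X_M]; pose M' := `|M| + 1.
apply: le_lt_trans (lebesgue_box_lty (\row_i (- M')) (\row_i M')).
apply: le_measure; rewrite ?inE //; first exact: measurable_box.
move=> x Xx i; rewrite !mxE.
have := le_trans (abs_coord_le_eucl_dist x i) (X_M x Xx).
by rewrite ler_norml => /andP[? ?]; have := ler_norm M; rewrite /M'; lra.
Qed.

End lebesgue.

Lemma measurable_fun_bigmin d (T : measurableType d) (R : realType) (I : Type)
    (r : seq I) (F : I -> T -> R) (x0 : R) :
  (forall i, measurable_fun setT (F i)) ->
  measurable_fun setT (fun x => \big[Order.min/x0]_(i <- r) F i x).
Proof.
move=> mF; elim: r => [|i r IH].
  by under eq_fun do rewrite big_nil; exact: measurable_cst.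
by under eq_fun do rewrite big_cons; exact: measurable_minr.
Qed.

Section cost.
Context (R : realType) (p : nat) (h : R -> R) (Cr : R).
Hypothesis h_nondecr : forall r s, 0 <= r -> r <= s -> h r <= h s.
Local Notation T := (Rp R p).

Definition served (t : R) (c : 'rV[R]_p) : set T := [set x | h (eucl_dist x c) <= t].

Lemma measurable_h_eucl_dist c : measurable_fun setT (fun x : T => h (eucl_dist x c)).
Proof.
have -> : (fun x : T => h (eucl_dist x c)) =
    (fun r => h (Num.max r 0)) \o (fun x : T => eucl_dist x c).
  by apply/funext => x /=; rewrite max_l // eucl_dist_ge0.
apply: measurableT_comp (measurable_eucl_dist c).
apply: nondecreasing_measurable => // r s rs.
apply: h_nondecr; first by rewrite le_max lexx orbT.
by rewrite ge_max !le_max rs lexx orbT.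
Qed.

Lemma measurable_served t c : measurable (served t c).
Proof.
have := measurable_h_eucl_dist c measurableT (measurable_itv `]-oo, t]).
by rewrite setTI preimage_itvNyc.
Qed.

Lemma served_translate t c : served t c = translate c @^-1` served t 0.
Proof. by apply/seteqP; split => x; rewrite /served /translate /= eucl_distB0. Qed.

Lemma served_cball_dichotomy t d :
  (forall c, served t c `<=` cball c d) \/ (forall c, cball c d `<=` served t c).
Proof.
have [[r [r_ge0 dr hr]]|no_r] := pselect (exists r, [/\ 0 <= r, d < r & h r <= t]).
  right => c x; rewrite /cball /served /= => xd; apply: le_trans hr.
  exact: h_nondecr (eucl_dist_ge0 _ _) (le_trans xd (ltW dr)).
left => c x hx; rewrite /cball /= leNgt; apply/negP => dx.
by apply: no_r; exists (eucl_dist x c); split; rewrite ?eucl_dist_ge0.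
Qed.

Context (k : nat).
Implicit Types (S : 'I_k -> 'rV[R]_p).

Lemma measurable_cost S : measurable_fun setT (cost h Cr S : T -> R).
Proof. by apply: measurable_fun_bigmin => j; exact: measurable_h_eucl_dist. Qed.

Lemma cost_gtP S t x :
  t < cost h Cr S x <-> t < Cr /\ ~ (\bigcup_j served t (S j)) x.
Proof.
split => [/bigmin_gtP[tCr t_lt]|[tCr not_served]].
  by split => // -[j _]; rewrite /served /= leNgt t_lt.
apply/bigmin_gtP; split => // j _; rewrite ltNge; apply/negP => hj.
by apply: not_served; exists j.
Qed.

End cost.

Section tessellation.
Context (R : realType) (p k : nat) (mu : {measure set (Rp R p) -> \bar R}).
Hypothesis lebesgue_mu : is_lebesgue mu.
Context (h : R -> R) (Cr : R).
Hypothesis h_nondecr : forall r s, 0 <= r -> r <= s -> h r <= h s.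
Context (X : set (Rp R p)) (y : 'I_k -> 'rV[R]_p) (d : R).
Hypotheses (mX : measurable X) (muX_fin : (mu X < +oo)%E)
  (tiles_cover : \bigcup_(j in [set: 'I_k]) cball (y j) d = X)
  (tiles_null : forall i j, i != j -> mu (cball (y i) d `&` cball (y j) d) = 0%E).
Implicit Types (S : 'I_k -> 'rV[R]_p) (t : R).

Let served_by t S := \bigcup_j served h t (S j).

Let measurable_served_by t S : measurable (served_by t S).
Proof.
rewrite /served_by bigcup_finE; apply: bigsetU_measurable => j _.
exact: measurable_served.
Qed.

Let tile_sub j : cball (y j) d `<=` X.
Proof. by rewrite -tiles_cover => x; exists j. Qed.

Lemma measure_served_by_le_tessellation S t :
  (forall c : 'rV[R]_p, served h t c `<=` cball c d) ->
  (mu (served_by t S) <= mu (served_by t y))%E.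
Proof.
move=> served_sub; have msrv (c : 'rV[R]_p) : measurable (served h t c).
  exact: measurable_served.
rewrite /served_by !bigcup_finE.
apply: le_trans (measure_bigsetU_le mu _ (fun j => msrv (S j))) _.
rewrite (eq_bigr (fun j => mu (served h t (y j)))) => [|j _]; last first.
  by rewrite (served_translate _ _ (S j)) (served_translate _ _ (y j)) !lebesgue_translate.
apply: sum_le_measure_bigsetU => //; first exact: index_enum_uniq.
- move=> i j ij; apply/eqP; rewrite -measure_le0 -(tiles_null ij).
  apply: le_measure; rewrite ?inE; first exact: measurableI.
    exact: measurableI (measurable_cball _ _) (measurable_cball _ _).
  by apply: setISS; exact: served_sub.
- move=> j; apply: le_lt_trans muX_fin; apply: le_measure; rewrite ?inE //.
  by move=> x /served_sub /tile_sub.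
Qed.

Lemma le_measure_served_tessellation S t :
  (mu (X `&` served_by t S) <= mu (X `&` served_by t y))%E.
Proof.
have [served_sub|cball_sub] := served_cball_dichotomy p h_nondecr t d.
  rewrite (setIidr (_ : served_by t y `<=` X)); last first.
    by move=> x [j _ /served_sub /tile_sub].
  apply: le_trans (measure_served_by_le_tessellation S served_sub).
  by apply: le_measure; rewrite ?inE //; exact: measurableI.
rewrite (setIidl (_ : X `<=` served_by t y)); last first.
  by rewrite -{1}tiles_cover => x [j _ /cball_sub]; exists j.
by apply: le_measure; rewrite ?inE //; exact: measurableI.
Qed.

Lemma le_measure_cost_gt_tessellation S t :
  (mu (X `&` [set x | (t < cost h Cr y x)%R]) <=
   mu (X `&` [set x | (t < cost h Cr S x)%R]))%E.
Proof.
have [tCr|Crt] := ltP t Cr; last first.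
  rewrite (_ : X `&` _ = set0) ?measure0 //.
  by apply/seteqP; split => x // [_ /cost_gtP[]]; rewrite ltNge Crt.
have setI_cost_gt S' : X `&` [set x | t < cost h Cr S' x] = X `\` served_by t S'.
  apply/seteqP; split => x [Xx x_S]; split => //; first by case/cost_gtP: x_S.
  exact/cost_gtP.
rewrite !setI_cost_gt !measureD //; apply: leeB => //.
exact: le_measure_served_tessellation.
Qed.

Lemma exp_cost_tessellation_le (lam : R) S : 0 < lam ->
  (forall r, 0 <= r -> 0 <= h r) -> 0 < Cr ->
  (exp_cost mu X lam h Cr y <= exp_cost mu X lam h Cr S)%E.
Proof.
move=> lam_gt0 h_ge0 Cr_gt0.
have cost_bnd S' x : 0 <= cost h Cr S' x <= Cr.
  apply/andP; split; last exact: bigmin_le_id.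
  by apply: le_bigmin => [|j _]; [exact: ltW | exact: h_ge0 (eucl_dist_ge0 _ _)].
have mcost S' : measurable_fun setT (fun x : Rp R p => lam * cost h Cr S' x).
  by apply: measurable_funM => //; exact: measurable_cost.
apply: (@le_integral_tails _ _ _ _ _ _ _ (lam * Cr)) => //; first exact: mulr_gt0.
- move=> x _; have /andP[c0 cCr] := cost_bnd y x.
  by rewrite mulr_ge0 ?ler_pM2l // ltW.
- by move=> x _; have /andP[c0 _] := cost_bnd S x; rewrite mulr_ge0 // ltW.
- move=> t; have := le_measure_cost_gt_tessellation S (t / lam).
  have scale S' :
      [set x | t < lam * cost h Cr S' x] = [set x | t / lam < cost h Cr S' x].
    by apply/seteqP; split => x /=; rewrite ltr_pdivrMr // mulrC.
  by rewrite !scale.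
Qed.

End tessellation.
Theorem corollary2 (R : realType) (p k : nat)
    (mu : {measure set (Rp R p) -> \bar R}) (Hmu : is_lebesgue mu)
    (X : set (Rp R p)) (HXm : measurable X)
    (HXb : exists M : R, forall x, X x -> eucl_dist x (0 : 'rV[R]_p) <= M)
    (lam : R) (Hlam : 0 < lam)
    (h : R -> R) (Hh_mono : forall r s, 0 <= r -> r <= s -> h r <= h s)
    (Hh_nneg : forall r, 0 <= r -> 0 <= h r)
    (Cr : R) (HCr : 0 < Cr)
    (y : 'I_k -> 'rV[R]_p) (Hy : cache_state X y)
    (Htess : exists d : R,
        \bigcup_(j in [set: 'I_k]) cball (y j) d = X /\
        forall i j : 'I_k, i != j -> mu (cball (y i) d `&` cball (y j) d) = 0%E) :
  optimal mu X lam h Cr y.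
Proof.
have [d [tiles_cover tiles_null]] := Htess.
have muX_fin := lebesgue_bounded_lty Hmu HXm HXb.
split => // S _.
exact (exp_cost_tessellation_le Hmu Hh_mono HXm muX_fin tiles_cover tiles_null
  S Hlam Hh_nneg HCr).
Qed.
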